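(* Let $\mathfrak{R}$ be a $3$-torsion free prime alternative ring containing a nontrivial idempotent $e_1$. Then every multiplicative Lie $3$-derivation $\mathcal{D}$ of $\mathfrak{R}$ is almost additive, i.e. $\mathcal{D}(a+b)-\mathcal{D}(a)-\mathcal{D}(b)\in\mathcal{Z}(\mathfrak{R})$ for all $a,b\in\mathfrak{R}$.
   Context: Rings are not assumed associative or unital. $\mathfrak{R}$ is alternative if $(x,x,y)=0=(y,x,x)$ for all $x,y$, where $(x,y,z)=(xy)z-x(yz)$; it is $3$-torsion free if $3x=0$ implies $x=0$; it is prime if $\mathfrak{A}\mathfrak{B}\ne0$ for any two nonzero ideals $\mathfrak{A},\mathfrak{B}$. $[x,y]=xy-yx$; $\mathcal{Z}(\mathfrak{R})=\{r: [r,x]=0\ \forall x\in\mathfrak{R}\}$. A map $\mathcal{D}\colon\mathfrak{R}\to\mathfrak{R}$, not necessarily additive, is a multiplicative Lie $3$-derivation if $\mathcal{D}([[x,y],w])=[[\mathcal{D}(x),y],w]+[[x,\mathcal{D}(y)],w]+[[x,y],\mathcal{D}(w)]$ for all $x,y,w\in\mathfrak{R}$. A nontrivial idempotent is $e_1\ne0$ with $e_1^2=e_1$ which is not a multiplicative identity. *)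

(* A (not necessarily associative, not necessarily unital)
   ring is an additive abelian group (zmodType) R with a biadditive
   multiplication mul : R -> R -> R. *)
From mathcomp Require Import all_boot all_algebra.
Set Implicit Arguments. Unset Strict Implicit. Unset Printing Implicit Defensive.
Import GRing.Theory.
Local Open Scope ring_scope.

Section NonAssoc.
Variables (R : zmodType) (mul : R -> R -> R).

Definition biadditive : Prop :=
  (forall x y z, mul (x + y) z = mul x z + mul y z) /\
  (forall x y z, mul x (y + z) = mul x y + mul x z).

Definition associator (x y z : R) : R := mul (mul x y) z - mul x (mul y z).

Definition alternative : Prop :=
  forall x y, associator x x y = 0 /\ associator y x x = 0.

Definition three_torsion_free : Prop := forall x : R, x *+ 3 = 0 -> x = 0.

Definition is_ideal (A : R -> Prop) : Prop :=
  A 0 /\ (forall x y, A x -> A y -> A (x - y)) /\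
  (forall r x, A x -> A (mul r x) /\ A (mul x r)).

Definition nonzero_set (A : R -> Prop) : Prop := exists x, A x /\ x <> 0.

(* AB <> 0 : the additive subgroup generated by the products ab is nonzero,
   i.e. some product ab with a in A, b in B is nonzero. *)
Definition prime_ring : Prop :=
  forall A B : R -> Prop, is_ideal A -> is_ideal B ->
    nonzero_set A -> nonzero_set B ->
    exists a b, A a /\ B b /\ mul a b <> 0.

Definition comm (x y : R) : R := mul x y - mul y x.

Definition in_center (r : R) : Prop := forall x, comm r x = 0.

Definition is_mult_identity (e : R) : Prop :=
  forall x, mul e x = x /\ mul x e = x.

Definition nontrivial_idempotent (e : R) : Prop :=
  e <> 0 /\ mul e e = e /\ ~ is_mult_identity e.

Definition mult_Lie3_derivation (D : R -> R) : Prop :=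
  forall x y w,
    D (comm (comm x y) w) =
      comm (comm (D x) y) w + comm (comm x (D y)) w + comm (comm x y) (D w).

End NonAssoc.

(* Let t = D (a + b) - D a - D b.  As D respects double commutators, which
   are biadditive, the additivity defect of D at [[a, y], w] and [[b, y], w]
   is [[t, y], w].  Fix an idempotent e with Peirce decomposition
   R = R11 + R12 + R21 + R22.  Then [[x, e], e] = x12 + x21, so [[t, e], e]
   is the defect of D at a12 + a21 and b12 + b21; it vanishes once D is
   additive on R12 + R21, and [[t, e], e] = 0 forces [t, e] = 0.  Additivity
   across R12 x R21 and on R12 comes from evaluating D on double commutators
   such as [[e + x, e - y], e] = x + y; additivity on R21 is the R12 case in
   the converse ring.  Applied to e1 and to the idempotents e1 + c with c in
   R12 or R21, this shows that t centralizes e1, R12 and R21; primeness,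
   through annihilator ideals of the Peirce spaces, then makes t central.
   The associators met on the way vanish outright. *)

From mathcomp Require Import all_boot all_algebra.
Set Implicit Arguments. Unset Strict Implicit. Unset Printing Implicit Defensive.
Import GRing.Theory.
Local Open Scope ring_scope.

(* [zmod_normalize] proves the equalities that hold in every abelian group,
   treating all non-additive subterms as atoms ([ring] needs a ring structure,
   which R lacks). *)
Module ZmodNormalize.

Inductive term : Type := Var of nat | Zero | Add of term & term | Opp of term.

Section Eval.
Variable V : zmodType.

Fixpoint eval (env : seq V) (t : term) : V :=
  match t with
  | Var n => env`_n
  | Zero => 0
  | Add t1 t2 => eval env t1 + eval env t2
  | Opp t1 => - eval env t1
  end.

Fixpoint coef (t : term) (i : nat) : int :=
  match t with
  | Var n => (n == i)%:Z
  | Zero => 0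
  | Add t1 t2 => coef t1 i + coef t2 i
  | Opp t1 => - coef t1 i
  end.

Lemma eval_coef env t : eval env t = \sum_(i < size env) env`_i *~ coef t i.
Proof.
elim: t => [n||t1 IH1 t2 IH2|t1 IH1] /=.
- rewrite (eq_bigr (fun i : 'I__ => if i == n :> nat then env`_i else 0)).
    rewrite -big_mkcond big_ord1_eq; case: ltnP => // le_size_n.
    by rewrite nth_default.
  by move=> i _; rewrite eq_sym; case: eqP.
- by rewrite big1 // => i _; rewrite mulr0z.
- by rewrite IH1 IH2 -big_split; apply: eq_bigr => i _; rewrite mulrzDr.
- by rewrite IH1 -sumrN; apply: eq_bigr => i _; rewrite mulrNz.
Qed.

Lemma eval_eq env t1 t2 :
  all (fun i => coef t1 i == coef t2 i) (iota 0 (size env)) ->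
  eval env t1 = eval env t2.
Proof.
move=> /allP same_coef; rewrite !eval_coef; apply: eq_bigr => i _.
by rewrite (eqP (same_coef i _)) // mem_iota add0n ltn_ord.
Qed.

End Eval.

Ltac find_atom t env :=
  lazymatch env with
  | cons t _ => constr:(0%N)
  | cons _ ?env' => let n := find_atom t env' in constr:(S n)
  end.

Ltac add_atoms t env :=
  lazymatch t with
  | @GRing.add _ ?a ?b => let env' := add_atoms a env in add_atoms b env'
  | @GRing.opp _ ?a => add_atoms a env
  | @GRing.zero _ => env
  | _ => lazymatch env with
         | context [cons t _] => env
         | _ => constr:(cons t env)
         end
  end.

Ltac reify t env :=
  lazymatch t with
  | @GRing.add _ ?a ?b =>
      let ra := reify a env in let rb := reify b env in constr:(Add ra rb)
  | @GRing.opp _ ?a => let ra := reify a env in constr:(Opp ra)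
  | @GRing.zero _ => constr:(Zero)
  | _ => let n := find_atom t env in constr:(Var n)
  end.

End ZmodNormalize.

Ltac zmod_normalize :=
  lazymatch goal with |- @eq ?V ?l ?r =>
    let env := ZmodNormalize.add_atoms l (@nil V) in
    let env := ZmodNormalize.add_atoms r env in
    let tl := ZmodNormalize.reify l env in
    let tr := ZmodNormalize.reify r env in
    change (ZmodNormalize.eval env tl = ZmodNormalize.eval env tr);
    apply: ZmodNormalize.eval_eq; vm_compute; reflexivity
  end.

(* [zmod_linear h] proves [l = r] when [l - r] is formally plus or minus the
   difference of the two sides of [h]. *)
Ltac zmod_linear h :=
  apply/subr0_eq;
  lazymatch type of h with ?l = ?r =>
    first [ transitivity (l - r); [zmod_normalize | by rewrite h subrr]
          | transitivity (r - l); [zmod_normalize | by rewrite h subrr] ]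
  end.

Lemma oppr0_inj (V : zmodType) (x : V) : - x = 0 -> x = 0.
Proof. by move/eqP; rewrite oppr_eq0 => /eqP. Qed.

(** * Alternative rings *)

Section AlternativeRing.
Variables (R : zmodType) (mul : R -> R -> R).
Hypotheses (mul_biadditive : biadditive mul) (mul_alternative : alternative mul).
Local Notation "x ⊙ y" := (mul x y) (at level 40, left associativity).
Local Notation "[ x , y ]" := (comm mul x y).
Local Notation assoc := (associator mul).

Lemma mulrDl x y z : (x + y) ⊙ z = x ⊙ z + y ⊙ z. Proof. exact: mul_biadditive.1. Qed.
Lemma mulrDr x y z : x ⊙ (y + z) = x ⊙ y + x ⊙ z. Proof. exact: mul_biadditive.2. Qed.
Lemma mul0r x : 0 ⊙ x = 0.
Proof. by apply: (addrI (0 ⊙ x)); rewrite -mulrDl !addr0. Qed.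
Lemma mulr0 x : x ⊙ 0 = 0.
Proof. by apply: (addrI (x ⊙ 0)); rewrite -mulrDr !addr0. Qed.
Lemma mulNr x y : (- x) ⊙ y = - (x ⊙ y).
Proof. by apply: (addrI (x ⊙ y)); rewrite -mulrDl !subrr mul0r. Qed.
Lemma mulrN x y : x ⊙ (- y) = - (x ⊙ y).
Proof. by apply: (addrI (x ⊙ y)); rewrite -mulrDr !subrr mulr0. Qed.

Local Ltac expand :=
  repeat progress rewrite ?mulrDl ?mulrDr ?mulNr ?mulrN ?mul0r ?mulr0.

Lemma commDl x y z : [x + y, z] = [x, z] + [y, z].
Proof. by rewrite /comm; expand; zmod_normalize. Qed.
Lemma commDr x y z : [x, y + z] = [x, y] + [x, z].
Proof. by rewrite /comm; expand; zmod_normalize. Qed.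
Lemma commNl x y : [- x, y] = - [x, y].
Proof. by rewrite /comm; expand; zmod_normalize. Qed.
Lemma commNr x y : [x, - y] = - [x, y].
Proof. by rewrite /comm; expand; zmod_normalize. Qed.
Lemma comm0l x : [0, x] = 0.
Proof. by rewrite /comm mul0r mulr0 subrr. Qed.
Lemma comm0r x : [x, 0] = 0.
Proof. by rewrite /comm mul0r mulr0 subrr. Qed.
Lemma commxx x : [x, x] = 0.
Proof. exact: subrr. Qed.
Lemma commC x y : [y, x] = - [x, y].
Proof. by rewrite /comm opprB. Qed.

Lemma mulA_l x y z : (x ⊙ y) ⊙ z = x ⊙ (y ⊙ z) + assoc x y z.
Proof. by rewrite /associator addrC subrK. Qed.

Lemma mulA_r x y z : x ⊙ (y ⊙ z) = (x ⊙ y) ⊙ z - assoc x y z.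
Proof. by rewrite /associator opprB addrC subrK. Qed.

Lemma associator_xxy x y : assoc x x y = 0. Proof. exact: (mul_alternative x y).1. Qed.
Lemma associator_yxx x y : assoc y x x = 0. Proof. exact: (mul_alternative x y).2. Qed.

Lemma alternative_l x y : (x ⊙ x) ⊙ y = x ⊙ (x ⊙ y).
Proof. by rewrite mulA_l associator_xxy addr0. Qed.
Lemma alternative_r x y : (y ⊙ x) ⊙ x = y ⊙ (x ⊙ x).
Proof. by rewrite mulA_l associator_yxx addr0. Qed.

Lemma associatorC12 x y z : assoc x y z = - assoc y x z.
Proof.
have h : assoc (x + y) (x + y) z - assoc x x z - assoc y y z = 0.
  by rewrite !associator_xxy !subr0.
by move: h; rewrite /associator; expand => h; zmod_linear h.
Qed.

Lemma associatorC23 x y z : assoc x y z = - assoc x z y.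
Proof.
have h : assoc x (y + z) (y + z) - assoc x y y - assoc x z z = 0.
  by rewrite !associator_yxx !subr0.
by move: h; rewrite /associator; expand => h; zmod_linear h.
Qed.

Lemma associator_cycle x y z : assoc x y z = assoc y z x.
Proof. by rewrite associatorC12 associatorC23 opprK. Qed.

Lemma associator_xyx x y : assoc x y x = 0.
Proof. by rewrite associatorC12 associator_yxx oppr0. Qed.

Lemma flexible x y : (x ⊙ y) ⊙ x = x ⊙ (y ⊙ x).
Proof. by rewrite mulA_l associator_xyx addr0. Qed.

Lemma teichmuller w x y z :
  assoc (w ⊙ x) y z - assoc w (x ⊙ y) z + assoc w x (y ⊙ z) =
  w ⊙ assoc x y z + assoc w x y ⊙ z.
Proof. by rewrite /associator; expand; zmod_normalize. Qed.

Lemma moufang_l x a y : ((x ⊙ a) ⊙ x) ⊙ y = x ⊙ (a ⊙ (x ⊙ y)).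
Proof.
have T1 := teichmuller x x a y; have T2 := teichmuller x x y a.
rewrite !associator_xxy ?mul0r !addr0 in T1 T2.
rewrite (associatorC23 (x ⊙ x)) (associatorC23 x y) mulrN in T2.
rewrite (mulA_l (x ⊙ a)) mulA_l.
rewrite (associatorC12 (x ⊙ a)) (associatorC23 x a); zmod_linear (congr2 +%R T1 T2).
Qed.

Lemma moufang_r x a y : y ⊙ ((x ⊙ a) ⊙ x) = ((y ⊙ x) ⊙ a) ⊙ x.
Proof.
have T1 := teichmuller y a x x; have T2 := teichmuller a y x x.
rewrite !associator_yxx ?mulr0 !add0r in T1 T2.
rewrite (associatorC12 a y) (associatorC12 a y x) mulNr in T2.
rewrite flexible mulA_l (mulA_l y).
rewrite (associatorC12 (y ⊙ x)) (associatorC23 y x); zmod_linear (congr2 +%R T1 T2).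
Qed.

Lemma mul_eq0_of_cycle p q r : q ⊙ r = 0 -> r ⊙ p = 0 -> (p ⊙ q) ⊙ r = 0.
Proof.
move=> qr0 rp0; rewrite mulA_l qr0 mulr0 add0r associator_cycle.
by rewrite /associator qr0 rp0 mul0r mulr0 subrr.
Qed.

Lemma comm_mul_leibniz x y z :
  [x ⊙ y, z] - x ⊙ [y, z] - [x, z] ⊙ y = assoc x y z *+ 3.
Proof.
have -> : [x ⊙ y, z] - x ⊙ [y, z] - [x, z] ⊙ y =
          assoc x y z - assoc x z y + assoc z x y.
  by rewrite /comm /associator; expand; zmod_normalize.
rewrite (associatorC23 x z) (associator_cycle z) !mulrS mulr0n; zmod_normalize.
Qed.

Lemma commr_eq0 x y z :
  assoc x y z = 0 -> [x ⊙ y, z] = 0 -> [y, z] = 0 -> [x, z] ⊙ y = 0.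
Proof.
move=> A0 xyz yz; have := comm_mul_leibniz x y z.
by rewrite A0 mul0rn xyz yz mulr0 subrr sub0r => /oppr0_inj.
Qed.

Lemma comml_eq0 x y z :
  assoc x y z = 0 -> [x ⊙ y, z] = 0 -> [x, z] = 0 -> x ⊙ [y, z] = 0.
Proof.
move=> A0 xyz xz; have := comm_mul_leibniz x y z.
by rewrite A0 mul0rn xyz xz mul0r subr0 sub0r => /oppr0_inj.
Qed.

Variable D : R -> R.
Hypothesis D_Lie3 : mult_Lie3_derivation mul D.

Definition add_defect a b := D (a + b) - D a - D b.

Lemma Lie3_D0 : D 0 = 0.
Proof. by have := D_Lie3 0 0 0; rewrite !(commxx, comm0l, comm0r) !addr0. Qed.

Lemma add_defect0l a : add_defect 0 a = 0.
Proof. by rewrite /add_defect add0r Lie3_D0 subr0 subrr. Qed.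
Lemma add_defect0r a : add_defect a 0 = 0.
Proof. by rewrite /add_defect addr0 Lie3_D0 subr0 subrr. Qed.

Lemma add_defect_comm2l a b y w :
  add_defect [[a, y], w] [[b, y], w] = [[add_defect a b, y], w].
Proof.
rewrite /add_defect; have -> : [[a, y], w] + [[b, y], w] = [[a + b, y], w].
  by rewrite /comm; expand; zmod_normalize.
by rewrite !D_Lie3 /comm; expand; zmod_normalize.
Qed.

Lemma add_defect_comm2r a b y w :
  add_defect [[y, w], a] [[y, w], b] = [[y, w], add_defect a b].
Proof.
rewrite /add_defect; have -> : [[y, w], a] + [[y, w], b] = [[y, w], a + b].
  by rewrite /comm; expand; zmod_normalize.
by rewrite !D_Lie3 /comm; expand; zmod_normalize.
Qed.

(** * The Peirce decomposition *)

Section Peirce.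
Variable e : R.
Hypothesis idem_e : e ⊙ e = e.

(* [peirce i j] is the Peirce space R_ij of e, with [true] standing for the
   index 1 and [false] for the index 2. *)
Definition peirce (i j : bool) (x : R) : Prop :=
  e ⊙ x = (if i then x else 0) /\ x ⊙ e = (if j then x else 0).

Local Notation R11 := (peirce true true).
Local Notation R12 := (peirce true false).
Local Notation R21 := (peirce false true).
Local Notation R22 := (peirce false false).

Lemma peirce0 i j : peirce i j 0.
Proof. by split; rewrite ?mulr0 ?mul0r; case: ifP. Qed.

Lemma peirceD i j x y : peirce i j x -> peirce i j y -> peirce i j (x + y).
Proof.
move=> [x1 x2] [y1 y2].
by split; [rewrite mulrDr x1 y1 | rewrite mulrDl x2 y2]; case: ifP; rewrite ?addr0.
Qed.

Lemma peirceN i j x : peirce i j x -> peirce i j (- x).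
Proof.
move=> [x1 x2].
by split; [rewrite mulrN x1 | rewrite mulNr x2]; case: ifP; rewrite ?oppr0.
Qed.

Lemma peirceB i j x y : peirce i j x -> peirce i j y -> peirce i j (x - y).
Proof. by move=> px py; apply/peirceD/peirceN. Qed.

Lemma peirce_sum_eq0 j k u v :
  peirce true j u -> peirce false k v -> u + v = 0 -> u = 0 /\ v = 0.
Proof.
move=> [/= u1 _] [/= v1 _] uv0.
have : e ⊙ (u + v) = 0 by rewrite uv0 mulr0.
by rewrite mulrDr u1 v1 addr0 => u0; move: uv0; rewrite u0 add0r.
Qed.

Lemma left_mul_e x y : e ⊙ (x ⊙ y) = (x ⊙ e) ⊙ y + (e ⊙ x) ⊙ y - x ⊙ (e ⊙ y).
Proof. by have := associatorC12 x e y; rewrite /associator => h; zmod_linear h. Qed.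

Lemma right_mul_e x y : (x ⊙ y) ⊙ e = x ⊙ (y ⊙ e) + x ⊙ (e ⊙ y) - (x ⊙ e) ⊙ y.
Proof. by have := associatorC23 x y e; rewrite /associator => h; zmod_linear h. Qed.

Local Ltac peirce_product :=
  intros [a1 a2] [b1 b2];
  split; [rewrite left_mul_e | rewrite right_mul_e];
  rewrite ?a1 ?a2 ?b1 ?b2 /=; expand; zmod_normalize.

Lemma mul11_11 a b : R11 a -> R11 b -> R11 (a ⊙ b). Proof. peirce_product. Qed.
Lemma mul11_12 a b : R11 a -> R12 b -> R12 (a ⊙ b). Proof. peirce_product. Qed.
Lemma mul12_12 a b : R12 a -> R12 b -> R21 (a ⊙ b). Proof. peirce_product. Qed.
Lemma mul12_21 a b : R12 a -> R21 b -> R11 (a ⊙ b). Proof. peirce_product. Qed.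
Lemma mul12_22 a b : R12 a -> R22 b -> R12 (a ⊙ b). Proof. peirce_product. Qed.
Lemma mul21_11 a b : R21 a -> R11 b -> R21 (a ⊙ b). Proof. peirce_product. Qed.
Lemma mul21_12 a b : R21 a -> R12 b -> R22 (a ⊙ b). Proof. peirce_product. Qed.
Lemma mul21_21 a b : R21 a -> R21 b -> R12 (a ⊙ b). Proof. peirce_product. Qed.
Lemma mul22_21 a b : R22 a -> R21 b -> R21 (a ⊙ b). Proof. peirce_product. Qed.
Lemma mul22_22 a b : R22 a -> R22 b -> R22 (a ⊙ b). Proof. peirce_product. Qed.

Lemma mul11_21_eq0 a b : R11 a -> R21 b -> a ⊙ b = 0.
Proof. by move=> [a1 a2] [b1 _]; have := moufang_l e a b; rewrite a1 a2 b1 !mulr0. Qed.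
Lemma mul11_22_eq0 a b : R11 a -> R22 b -> a ⊙ b = 0.
Proof. by move=> [a1 a2] [b1 _]; have := moufang_l e a b; rewrite a1 a2 b1 !mulr0. Qed.
Lemma mul12_11_eq0 a b : R12 a -> R11 b -> a ⊙ b = 0.
Proof. by move=> [_ a2] [b1 b2]; have := moufang_r e b a; rewrite b1 b2 a2 !mul0r. Qed.
Lemma mul22_11_eq0 a b : R22 a -> R11 b -> a ⊙ b = 0.
Proof. by move=> [_ a2] [b1 b2]; have := moufang_r e b a; rewrite b1 b2 a2 !mul0r. Qed.

Lemma mul22_12_eq0 a b : R22 a -> R12 b -> a ⊙ b = 0.
Proof.
move=> [a1 a2] [b1 _]; have := moufang_l e a b; rewrite a1 b1 !mul0r => eab.
have := left_mul_e a b; rewrite -eab a1 a2 b1 !mul0r !add0r.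
by move=> /esym/oppr0_inj.
Qed.
Lemma mul21_22_eq0 a b : R21 a -> R22 b -> a ⊙ b = 0.
Proof.
move=> [_ a2] [b1 b2]; have := moufang_r e b a; rewrite b1 a2 !mul0r mulr0 => abe.
have := right_mul_e a b; rewrite -abe b1 b2 a2 !mulr0 !add0r.
by move=> /esym/oppr0_inj.
Qed.

Lemma sqr12_eq0 a : R12 a -> a ⊙ a = 0.
Proof.
move=> pa; have [_ /= <-] := mul12_12 pa pa.
by rewrite alternative_l; case: pa => _ ->; rewrite mulr0.
Qed.

Lemma sqr21_eq0 a : R21 a -> a ⊙ a = 0.
Proof.
move=> pa; have [/= <- _] := mul21_21 pa pa.
by rewrite -alternative_r; case: pa => -> _; rewrite mul0r.
Qed.

Lemma idempotentD12 c : R12 c -> (e + c) ⊙ (e + c) = e + c.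
Proof.
move=> hc; have [/= c1 c2] := hc.
by rewrite mulrDl !mulrDr idem_e c1 c2 (sqr12_eq0 hc); zmod_normalize.
Qed.

Lemma idempotentD21 c : R21 c -> (e + c) ⊙ (e + c) = e + c.
Proof.
move=> hc; have [/= c1 c2] := hc.
by rewrite mulrDl !mulrDr idem_e c1 c2 (sqr21_eq0 hc); zmod_normalize.
Qed.

Lemma idem_mulKl x : e ⊙ (e ⊙ x) = e ⊙ x. Proof. by rewrite -alternative_l idem_e. Qed.
Lemma idem_mulKr x : (x ⊙ e) ⊙ e = x ⊙ e. Proof. by rewrite alternative_r idem_e. Qed.

Definition proj11 x := (e ⊙ x) ⊙ e.
Definition proj12 x := e ⊙ x - (e ⊙ x) ⊙ e.
Definition proj21 x := x ⊙ e - (e ⊙ x) ⊙ e.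
Definition proj22 x := x - e ⊙ x - x ⊙ e + (e ⊙ x) ⊙ e.

Local Ltac proj_peirce :=
  split; expand; repeat progress rewrite ?flexible ?idem_mulKl ?idem_mulKr;
  zmod_normalize.

Lemma proj11P x : R11 (proj11 x). Proof. by rewrite /proj11; proj_peirce. Qed.
Lemma proj12P x : R12 (proj12 x). Proof. by rewrite /proj12; proj_peirce. Qed.
Lemma proj21P x : R21 (proj21 x). Proof. by rewrite /proj21; proj_peirce. Qed.
Lemma proj22P x : R22 (proj22 x). Proof. by rewrite /proj22; proj_peirce. Qed.

Variant peirce_spec x : Prop :=
  PeirceSpec r11 r12 r21 r22 of R11 r11 & R12 r12 & R21 r21 & R22 r22
    & x = r11 + r12 + r21 + r22.

Lemma peirceP x : peirce_spec x.
Proof.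
apply: (PeirceSpec (proj11P x) (proj12P x) (proj21P x) (proj22P x)).
by rewrite /proj11 /proj12 /proj21 /proj22; zmod_normalize.
Qed.

Lemma comm_peirce_e i r : peirce i i r -> [r, e] = 0.
Proof. by move=> [r1 r2]; rewrite /comm r1 r2 subrr. Qed.
Lemma comm12_e r : R12 r -> [r, e] = - r.
Proof. by move=> [/= r1 r2]; rewrite /comm r1 r2 add0r. Qed.
Lemma comm21_e r : R21 r -> [r, e] = r.
Proof. by move=> [/= r1 r2]; rewrite /comm r1 r2 subr0. Qed.

Lemma comm_comm_e x : [[x, e], e] = proj12 x + proj21 x.
Proof.
have -> : [x, e] = proj21 x - proj12 x.
  by rewrite /comm /proj21 /proj12; zmod_normalize.
by rewrite commDl commNl (comm21_e (proj21P x)) (comm12_e (proj12P x)) opprK addrC.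
Qed.

Lemma comm_e_eq0 x : [[x, e], e] = 0 -> [x, e] = 0.
Proof.
rewrite comm_comm_e => /(peirce_sum_eq0 (proj12P x) (proj21P x)).
by rewrite /proj12 /proj21 /comm => -[/subr0_eq <- /subr0_eq ->]; rewrite subrr.
Qed.

Lemma comm_comm12_21_e p q : R12 p -> R21 q -> [[p, q], e] = 0.
Proof.
move=> pp pq; rewrite /comm -/([p ⊙ q - q ⊙ p, e]) commDl commNl.
by rewrite (comm_peirce_e (mul12_21 pp pq)) (comm_peirce_e (mul21_12 pq pp)) subrr.
Qed.

Variant diag_spec t : Prop := DiagSpec t11 t22 of R11 t11 & R22 t22 & t = t11 + t22.

Lemma comm_e0P t : [t, e] = 0 -> diag_spec t.
Proof.
move=> /subr0_eq te; apply: (DiagSpec (proj11P t) (proj22P t)).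
by rewrite /proj11 /proj22 -te idem_mulKr; zmod_normalize.
Qed.

Lemma comm_e0_comm11 t s : [t, e] = 0 -> R11 s -> R11 [s, t].
Proof.
move=> /comm_e0P[t11 t22 h11 h22 ->] hs.
have -> : [s, t11 + t22] = s ⊙ t11 - t11 ⊙ s.
  rewrite /comm; expand; rewrite (mul11_22_eq0 hs h22) (mul22_11_eq0 h22 hs).
  by zmod_normalize.
by apply: peirceB; apply: mul11_11.
Qed.

Lemma comm_e0_comm22 t s : [t, e] = 0 -> R22 s -> R22 [s, t].
Proof.
move=> /comm_e0P[t11 t22 h11 h22 ->] hs.
have -> : [s, t11 + t22] = s ⊙ t22 - t22 ⊙ s.
  rewrite /comm; expand; rewrite (mul22_11_eq0 hs h11) (mul11_22_eq0 h11 hs).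
  by zmod_normalize.
by apply: peirceB; apply: mul22_22.
Qed.

Lemma comm_e0_comm12 t x : [t, e] = 0 -> R12 x -> R12 [x, t].
Proof.
move=> /comm_e0P[t11 t22 h11 h22 ->] hx.
have -> : [x, t11 + t22] = x ⊙ t22 - t11 ⊙ x.
  rewrite /comm; expand; rewrite (mul12_11_eq0 hx h11) (mul22_12_eq0 h22 hx).
  by zmod_normalize.
by apply: peirceB; [apply: mul12_22 | apply: mul11_12].
Qed.

Lemma comm_e0_comm21 t y : [t, e] = 0 -> R21 y -> R21 [t, y].
Proof.
move=> /comm_e0P[t11 t22 h11 h22 ->] hy.
have -> : [t11 + t22, y] = t22 ⊙ y - y ⊙ t11.
  rewrite /comm; expand; rewrite (mul11_21_eq0 h11 hy) (mul21_22_eq0 hy h22).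
  by zmod_normalize.
by apply: peirceB; [apply: mul22_21 | apply: mul21_11].
Qed.

(** * Annihilators in prime rings *)

Hypothesis mul_prime : prime_ring mul.

Lemma left_annihilator_ideal (I : R -> Prop) :
  is_ideal mul I -> is_ideal mul (fun x => forall j, I j -> x ⊙ j = 0).
Proof.
move=> [_ [_ IM]]; split; first by move=> j _; rewrite mul0r.
split=> [x y x0 y0 j Ij | r x x0]; first by rewrite mulrDl mulNr x0 // y0 // subrr.
split=> j Ij; have [Irj Ijr] := IM r j Ij;
  have xjr : assoc x j r = 0 by rewrite /associator !x0 // mul0r subrr.
- by rewrite mulA_l x0 // mulr0 add0r associator_cycle xjr.
- by rewrite mulA_l x0 // add0r associatorC12 associator_cycle xjr oppr0.
Qed.

Lemma left_annihilator_eq0 (I : R -> Prop) :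
  is_ideal mul I -> nonzero_set I -> forall x, (forall j, I j -> x ⊙ j = 0) -> x = 0.
Proof.
move=> iI nzI x xI0; case: (eqVneq x 0) => // /eqP x_neq0.
have [a [b [aI0 [Ib []]]]] :=
  mul_prime (left_annihilator_ideal iI) iI (ex_intro _ x (conj xI0 x_neq0)) nzI.
exact: aI0.
Qed.

Definition ann11 d :=
  [/\ R11 d, forall x, R12 x -> d ⊙ x = 0 & forall y, R21 y -> y ⊙ d = 0].

Lemma ann11_mull s d : R11 s -> ann11 d -> ann11 (s ⊙ d).
Proof.
move=> hs [hd d12 d21]; split=> [|x hx|y hy]; first exact: mul11_11.
- rewrite mulA_l d12 // mulr0 add0r associator_cycle /associator d12 // mul0r.
  by rewrite (mul12_11_eq0 hx hs) mulr0 subrr.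
- rewrite mulA_r d21; last exact: mul21_11.
  rewrite associator_cycle /associator (mul11_21_eq0 (mul11_11 hs hd) hy).
  by rewrite (mul11_21_eq0 hd hy) mulr0 !subrr.
Qed.

Lemma ann11_mulr s d : R11 s -> ann11 d -> ann11 (d ⊙ s).
Proof.
move=> hs [hd d12 d21]; split=> [|x hx|y hy]; first exact: mul11_11.
- rewrite mulA_l d12; last exact: mul11_12.
  rewrite add0r associator_cycle /associator (mul12_11_eq0 (mul11_12 hs hx) hd).
  by rewrite (mul12_11_eq0 hx hd) mulr0 subrr.
- rewrite mulA_r d21 // mul0r associator_cycle /associator.
  by rewrite (mul11_21_eq0 (mul11_11 hd hs) hy) (mul11_21_eq0 hs hy) mulr0 !subrr.
Qed.

Lemma ann11_ideal : is_ideal mul ann11.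
Proof.
split; first by split=> [|x _|y _]; rewrite ?mulr0 ?mul0r //; exact: peirce0.
split=> [a b [ha a12 a21] [hb b12 b21] | r d [hd d12 d21]].
  split=> [|x hx|y hy]; first exact: peirceB.
  - by rewrite mulrDl mulNr a12 // b12 // subrr.
  - by rewrite mulrDr mulrN a21 // b21 // subrr.
have [r11 r12 r21 r22 h11 h12 h21 h22 ->] := peirceP r; split.
- rewrite !mulrDl (mul12_11_eq0 h12 hd) (d21 _ h21) (mul22_11_eq0 h22 hd) !addr0.
  exact: ann11_mull.
- rewrite !mulrDr (d12 _ h12) (mul11_21_eq0 hd h21) (mul11_22_eq0 hd h22) !addr0.
  exact: ann11_mulr.
Qed.

Lemma ann11_eq0 d : ~ is_mult_identity mul e -> ann11 d -> d = 0.
Proof.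
move=> not_unit d_ann; case: (eqVneq d 0) => // /eqP d_neq0; case: not_unit => x.
have ann0 := left_annihilator_eq0 ann11_ideal (ex_intro _ d (conj d_ann d_neq0)).
have [r11 r12 r21 r22 h11 h12 h21 h22 ->] := peirceP x.
have -> : r12 = 0 by apply: ann0 => v [hv _ _]; exact: mul12_11_eq0 h12 hv.
have -> : r21 = 0 by apply: ann0 => v [_ _ v21]; exact: v21.
have -> : r22 = 0 by apply: ann0 => v [hv _ _]; exact: mul22_11_eq0 h22 hv.
by rewrite !addr0.
Qed.

Definition ann22 d :=
  [/\ R22 d, forall x, R12 x -> x ⊙ d = 0 & forall y, R21 y -> d ⊙ y = 0].

Lemma ann22_mull s d : R22 s -> ann22 d -> ann22 (s ⊙ d).
Proof.
move=> hs [hd d12 d21]; split=> [|x hx|y hy]; first exact: mul22_22.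
- rewrite mulA_r d12; last exact: mul12_22.
  rewrite associator_cycle /associator (mul22_12_eq0 (mul22_22 hs hd) hx).
  by rewrite (mul22_12_eq0 hd hx) mulr0 !subrr.
- rewrite mulA_l d21 // mulr0 add0r associator_cycle /associator d21 // mul0r.
  by rewrite (mul21_22_eq0 hy hs) mulr0 subrr.
Qed.

Lemma ann22_mulr s d : R22 s -> ann22 d -> ann22 (d ⊙ s).
Proof.
move=> hs [hd d12 d21]; split=> [|x hx|y hy]; first exact: mul22_22.
- rewrite mulA_r d12 // mul0r associator_cycle /associator.
  by rewrite (mul22_12_eq0 (mul22_22 hd hs) hx) (mul22_12_eq0 hs hx) mulr0 !subrr.
- rewrite mulA_l d21; last exact: mul22_21.
  rewrite add0r associator_cycle /associator (mul21_22_eq0 (mul22_21 hs hy) hd).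
  by rewrite (mul21_22_eq0 hy hd) mulr0 subrr.
Qed.

Lemma ann22_ideal : is_ideal mul ann22.
Proof.
split; first by split=> [|x _|y _]; rewrite ?mulr0 ?mul0r //; exact: peirce0.
split=> [a b [ha a12 a21] [hb b12 b21] | r d [hd d12 d21]].
  split=> [|x hx|y hy]; first exact: peirceB.
  - by rewrite mulrDr mulrN a12 // b12 // subrr.
  - by rewrite mulrDl mulNr a21 // b21 // subrr.
have [r11 r12 r21 r22 h11 h12 h21 h22 ->] := peirceP r; split.
- rewrite !mulrDl (mul11_22_eq0 h11 hd) (d12 _ h12) (mul21_22_eq0 h21 hd) !add0r.
  exact: ann22_mull.
- rewrite !mulrDr (mul22_11_eq0 hd h11) (mul22_12_eq0 hd h12) (d21 _ h21) !add0r.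
  exact: ann22_mulr.
Qed.

Lemma ann22_eq0 d : e <> 0 -> ann22 d -> d = 0.
Proof.
move=> e_neq0 d_ann; case: (eqVneq d 0) => // /eqP d_neq0; case: e_neq0.
apply: (left_annihilator_eq0 ann22_ideal (ex_intro _ d (conj d_ann d_neq0))).
by move=> v [[]].
Qed.

Lemma mul12_anticomm a x : R12 a -> R12 x -> a ⊙ x = - (x ⊙ a).
Proof.
move=> ha hx; have := sqr12_eq0 (peirceD ha hx).
rewrite mulrDl !mulrDr (sqr12_eq0 ha) (sqr12_eq0 hx) add0r addr0.
by move=> /eqP; rewrite addr_eq0 => /eqP.
Qed.

Lemma mul21_anticomm a y : R21 a -> R21 y -> a ⊙ y = - (y ⊙ a).
Proof.
move=> ha hy; have := sqr21_eq0 (peirceD ha hy).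
rewrite mulrDl !mulrDr (sqr21_eq0 ha) (sqr21_eq0 hy) add0r addr0.
by move=> /eqP; rewrite addr_eq0 => /eqP.
Qed.

Definition ann12 a := R12 a /\ forall y, R21 y -> a ⊙ y = 0 /\ y ⊙ a = 0.
Definition ann21 b := R21 b /\ forall x, R12 x -> b ⊙ x = 0 /\ x ⊙ b = 0.

Lemma ann12_0 : ann12 0.
Proof. by split=> [|y _]; rewrite ?mul0r ?mulr0 //; exact: peirce0. Qed.
Lemma ann21_0 : ann21 0.
Proof. by split=> [|x _]; rewrite ?mul0r ?mulr0 //; exact: peirce0. Qed.

Lemma ann12D a b : ann12 a -> ann12 b -> ann12 (a + b).
Proof.
move=> [ha Ha] [hb Hb]; split=> [|y /[dup] /Ha[a1 a2] /Hb[b1 b2]]; first exact: peirceD.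
by rewrite mulrDl mulrDr a1 a2 b1 b2 addr0.
Qed.
Lemma ann21D a b : ann21 a -> ann21 b -> ann21 (a + b).
Proof.
move=> [ha Ha] [hb Hb]; split=> [|x /[dup] /Ha[a1 a2] /Hb[b1 b2]]; first exact: peirceD.
by rewrite mulrDl mulrDr a1 a2 b1 b2 addr0.
Qed.

Lemma ann12N a : ann12 a -> ann12 (- a).
Proof.
move=> [ha Ha]; split=> [|y /Ha[a1 a2]]; first exact: peirceN.
by rewrite mulNr mulrN a1 a2 oppr0.
Qed.
Lemma ann21N a : ann21 a -> ann21 (- a).
Proof.
move=> [ha Ha]; split=> [|x /Ha[a1 a2]]; first exact: peirceN.
by rewrite mulNr mulrN a1 a2 oppr0.
Qed.

Lemma ann12_mul11 s a : R11 s -> ann12 a -> ann12 (s ⊙ a).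
Proof.
move=> hs [ha Ha]; split=> [|y hy]; first exact: mul11_12.
have [ay0 ya0] := Ha y hy; have [ays0 ysa0] := Ha _ (mul21_11 hy hs).
have say0 : (s ⊙ a) ⊙ y = 0.
  by rewrite mulA_l ay0 mulr0 add0r associator_cycle /associator ay0 mul0r ays0 subrr.
by rewrite mulA_r ysa0 associator_cycle /associator say0 ay0 mulr0 !subrr.
Qed.

Lemma ann12_mul22 s a : R22 s -> ann12 a -> ann12 (a ⊙ s).
Proof.
move=> hs [ha Ha]; split=> [|y hy]; first exact: mul12_22.
have [ay0 ya0] := Ha y hy; have [asy0 sya0] := Ha _ (mul22_21 hs hy).
have asy : (a ⊙ s) ⊙ y = 0.
  by rewrite mulA_l asy0 add0r associator_cycle /associator sya0 ya0 mulr0 subrr.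
by rewrite mulA_r ya0 mul0r associator_cycle /associator asy asy0 !subrr.
Qed.

Lemma ann21_mul11 s b : R11 s -> ann21 b -> ann21 (b ⊙ s).
Proof.
move=> hs [hb Hb]; split=> [|x hx]; first exact: mul21_11.
have [bx0 xb0] := Hb x hx; have [bsx0 sxb0] := Hb _ (mul11_12 hs hx).
have bsx : assoc b s x = 0.
  by rewrite associator_cycle /associator sxb0 xb0 mulr0 subrr.
by rewrite mulA_l bsx0 add0r bsx mulA_r xb0 mul0r associator_cycle bsx subrr.
Qed.

Lemma ann21_mul22 s b : R22 s -> ann21 b -> ann21 (s ⊙ b).
Proof.
move=> hs [hb Hb]; split=> [|x hx]; first exact: mul22_21.
have [bx0 xb0] := Hb x hx; have [bxs0 xsb0] := Hb _ (mul12_22 hx hs).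
have sbx : assoc s b x = 0.
  by rewrite associator_cycle /associator bx0 mul0r bxs0 subrr.
by rewrite mulA_l bx0 mulr0 add0r sbx mulA_r xsb0 associator_cycle sbx subrr.
Qed.

Lemma ann12_mul12l x a : R12 x -> ann12 a -> ann21 (x ⊙ a).
Proof.
move=> hx [ha Ha]; split=> [|x' hx']; first exact: mul12_12.
have xa := mul12_12 hx ha; have ax' := mul12_12 ha hx'.
have [ax'x0 x'xa0] := Ha _ (mul12_12 hx' hx).
have C1 := associator_cycle x' x a; have C2 := associator_cycle x a x'.
rewrite /associator x'xa0 in C1; rewrite /associator ax'x0 in C2.
have [u0 /oppr0_inj ->] : x ⊙ (a ⊙ x') - x' ⊙ (x ⊙ a) = 0 /\ - ((x ⊙ a) ⊙ x') = 0.
  apply: peirce_sum_eq0; first exact: peirceB (mul12_21 hx ax') (mul12_21 hx' xa).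
    exact: peirceN (mul21_12 xa hx').
  by zmod_linear C1.
split=> //.
have [/oppr0_inj q0 _] : - (x ⊙ (a ⊙ x')) = 0 /\ (x ⊙ a) ⊙ x' - (a ⊙ x') ⊙ x = 0.
  apply: peirce_sum_eq0; first exact: peirceN (mul12_21 hx ax').
    exact: peirceB (mul21_12 xa hx') (mul21_12 ax' hx).
  by zmod_linear C2.
by move: u0; rewrite q0 sub0r => /oppr0_inj.
Qed.

Lemma ann12_mul12r x a : R12 x -> ann12 a -> ann21 (a ⊙ x).
Proof.
by move=> hx ha; rewrite (mul12_anticomm ha.1 hx); apply/ann21N/ann12_mul12l.
Qed.

Lemma ann21_mul21l y b : R21 y -> ann21 b -> ann12 (y ⊙ b).
Proof.
move=> hy [hb Hb]; split=> [|y' hy']; first exact: mul21_21.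
have yb := mul21_21 hy hb; have by' := mul21_21 hb hy'.
have [by'y0 y'yb0] := Hb _ (mul21_21 hy' hy).
have C1 := associator_cycle y' y b; have C2 := associator_cycle y b y'.
rewrite /associator y'yb0 in C1; rewrite /associator by'y0 in C2.
have [-> u0] : (y ⊙ b) ⊙ y' = 0 /\ y' ⊙ (y ⊙ b) - y ⊙ (b ⊙ y') = 0.
  apply: peirce_sum_eq0; first exact: mul12_21 yb hy'.
    exact: peirceB (mul21_12 hy' yb) (mul21_12 hy by').
  by zmod_linear C1.
split=> //.
have [_ /oppr0_inj q0] : (y ⊙ b) ⊙ y' - (b ⊙ y') ⊙ y = 0 /\ - (y ⊙ (b ⊙ y')) = 0.
  apply: peirce_sum_eq0; first exact: peirceB (mul12_21 yb hy') (mul12_21 by' hy).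
    exact: peirceN (mul21_12 hy by').
  by zmod_linear C2.
by move: u0; rewrite q0 subr0.
Qed.

Lemma ann21_mul21r y b : R21 y -> ann21 b -> ann12 (b ⊙ y).
Proof.
by move=> hy hb; rewrite (mul21_anticomm hb.1 hy); apply/ann12N/ann21_mul21l.
Qed.

Definition ann_offdiag z := exists a b, [/\ ann12 a, ann21 b & z = a + b].

Lemma ann_offdiag_ideal : is_ideal mul ann_offdiag.
Proof.
split; first by exists 0, 0; split; [exact: ann12_0 | exact: ann21_0 | rewrite addr0].
split=> [_ _ [a [b [ha hb ->]]] [a' [b' [ha' hb' ->]]] | r _ [a [b [ha hb ->]]]].
  exists (a - a'), (b - b'); split; [exact/ann12D/ann12N | exact/ann21D/ann21N |].
  by zmod_normalize.
have [r11 r12 r21 r22 h11 h12 h21 h22 ->] := peirceP r.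
have [pa Ha] := ha; have [pb Hb] := hb; split.
- exists (r11 ⊙ a + r21 ⊙ b), (r12 ⊙ a + r22 ⊙ b); split.
  + by apply: ann12D; [exact: ann12_mul11 | exact: ann21_mul21l].
  + by apply: ann21D; [exact: ann12_mul12l | exact: ann21_mul22].
  + expand; rewrite (Ha _ h21).2 (mul22_12_eq0 h22 pa) (mul11_21_eq0 h11 pb).
    by rewrite (Hb _ h12).2; zmod_normalize.
- exists (a ⊙ r22 + b ⊙ r21), (a ⊙ r12 + b ⊙ r11); split.
  + by apply: ann12D; [exact: ann12_mul22 | exact: ann21_mul21r].
  + by apply: ann21D; [exact: ann12_mul12r | exact: ann21_mul11].
  + expand; rewrite (mul12_11_eq0 pa h11) (Ha _ h21).1 (Hb _ h12).1.
    by rewrite (mul21_22_eq0 pb h22); zmod_normalize.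
Qed.

Lemma ann_offdiag_cube_eq0 i i' i'' :
  ann_offdiag i -> ann_offdiag i' -> ann_offdiag i'' -> (i ⊙ i') ⊙ i'' = 0.
Proof.
move=> [a [b [ha hb ->]]] [a' [b' [ha' hb' ->]]] [a'' [b'' [ha'' hb'' ->]]].
have aa' := ann12_mul12r ha'.1 ha; have bb' := ann21_mul21r hb'.1 hb.
expand; rewrite (ha.2 _ hb'.1).1 (hb.2 _ ha'.1).1 !mul0r.
rewrite (aa'.2 _ ha''.1).1 (bb'.2 _ hb''.1).1.
rewrite (mul_eq0_of_cycle (ha'.2 _ hb''.1).1 (hb''.2 _ ha.1).1).
rewrite (mul_eq0_of_cycle (hb'.2 _ ha''.1).1 (ha''.2 _ hb.1).1).
by zmod_normalize.
Qed.

Lemma ann12_eq0 m : ann12 m -> m = 0.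
Proof.
move=> m_ann; case: (eqVneq m 0) => // /eqP m_neq0.
have Im : ann_offdiag m by exists m, 0; split; [|exact: ann21_0|rewrite addr0].
have ann0 := left_annihilator_eq0 ann_offdiag_ideal (ex_intro _ m (conj Im m_neq0)).
apply: (ann0) => j Ij; apply: ann0 => k Ik; exact: ann_offdiag_cube_eq0.
Qed.

Section Centralizer.
Variable t : R.
Hypotheses (te : [t, e] = 0) (t12 : forall x, R12 x -> [t, x] = 0)
  (t21 : forall y, R21 y -> [t, y] = 0).

Let x_t x : R12 x -> [x, t] = 0.
Proof. by move=> hx; rewrite commC t12 ?oppr0. Qed.
Let y_t y : R21 y -> [y, t] = 0.
Proof. by move=> hy; rewrite commC t21 ?oppr0. Qed.

Lemma comm11_centralizer s : ~ is_mult_identity mul e -> R11 s -> [s, t] = 0.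
Proof.
move=> not_unit hs; have [t11 t22 h11 h22 tE] := comm_e0P te.
apply: ann11_eq0 not_unit _; split=> [|x hx|y hy]; first exact: comm_e0_comm11.
- apply: commr_eq0 (x_t hx); last exact/x_t/mul11_12.
  rewrite associator_cycle /associator tE; expand.
  rewrite (mul12_11_eq0 hx h11) (mul22_11_eq0 h22 hs); expand.
  rewrite (mul12_11_eq0 (mul12_22 hx h22) hs) (mul12_11_eq0 hx (mul11_11 h11 hs)).
  by zmod_normalize.
- apply: comml_eq0 (y_t hy); last exact/y_t/mul21_11.
  rewrite associator_cycle /associator tE; expand.
  rewrite (mul11_22_eq0 hs h22) (mul11_21_eq0 h11 hy); expand.
  rewrite (mul11_21_eq0 (mul11_11 hs h11) hy) (mul11_21_eq0 hs (mul22_21 h22 hy)).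
  by zmod_normalize.
Qed.

Lemma comm22_centralizer s : e <> 0 -> R22 s -> [s, t] = 0.
Proof.
move=> e_neq0 hs; have [t11 t22 h11 h22 tE] := comm_e0P te.
apply: ann22_eq0 e_neq0 _; split=> [|x hx|y hy]; first exact: comm_e0_comm22.
- apply: comml_eq0 (x_t hx); last exact/x_t/mul12_22.
  rewrite associator_cycle /associator tE; expand.
  rewrite (mul22_11_eq0 hs h11) (mul22_12_eq0 h22 hx); expand.
  rewrite (mul22_12_eq0 (mul22_22 hs h22) hx) (mul22_12_eq0 hs (mul11_12 h11 hx)).
  by zmod_normalize.
- apply: commr_eq0 (y_t hy); last exact/y_t/mul22_21.
  rewrite associator_cycle /associator tE; expand.
  rewrite (mul11_22_eq0 h11 hs) (mul21_22_eq0 hy h22); expand.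
  rewrite (mul21_22_eq0 (mul21_11 hy h11) hs) (mul21_22_eq0 hy (mul22_22 h22 hs)).
  by zmod_normalize.
Qed.

Lemma centralizer_center : e <> 0 -> ~ is_mult_identity mul e -> in_center mul t.
Proof.
move=> e_neq0 not_unit r; have [r11 r12 r21 r22 h11 h12 h21 h22 ->] := peirceP r.
rewrite !commDr (t12 h12) (t21 h21) (commC r11) (commC r22).
by rewrite comm11_centralizer // comm22_centralizer //; zmod_normalize.
Qed.

End Centralizer.

(** * Additivity of Lie 3-derivations on the Peirce spaces *)

Lemma comm_defect_e12 u : R12 u -> [add_defect e u, e] = 0.
Proof.
move=> hu; apply: comm_e_eq0; rewrite -add_defect_comm2l commxx comm0l.
by rewrite (comm12_e hu) commNl (comm12_e hu) opprK add_defect0l.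
Qed.

Lemma comm_defect21 u y : R12 u -> R21 y -> [add_defect e u, y] = 0.
Proof.
move=> hu hy; rewrite -(comm21_e (comm_e0_comm21 (comm_defect_e12 hu) hy)).
by rewrite -add_defect_comm2l (comm_comm12_21_e hu hy) add_defect0r.
Qed.

Lemma Lie3_additive12_21 x y : R12 x -> R21 y -> D (x + y) = D x + D y.
Proof.
move=> hx hy; have [/= x1 x2] := hx; have [/= y1 y2] := hy.
have [/= xy1 xy2] := mul12_21 hx hy; have [/= yx1 yx2] := mul21_12 hy hx.
have Ey : [[e, e - y], e] = y.
  rewrite /comm; expand.
  by repeat progress rewrite ?idem_e ?y1 ?y2 ?mul0r ?mulr0; zmod_normalize.
have Ex : [[x, e - y], e] = x.
  rewrite /comm; expand.
  repeat progress rewrite ?x1 ?x2 ?y1 ?y2 ?xy1 ?xy2 ?yx1 ?yx2 ?mul0r ?mulr0.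
  by zmod_normalize.
have Exy : x + y = [[e + x, e - y], e].
  rewrite /comm; expand.
  repeat progress rewrite ?idem_e ?x1 ?x2 ?y1 ?y2 ?xy1 ?xy2 ?yx1 ?yx2 ?mul0r ?mulr0.
  by zmod_normalize.
have t_comm : [[add_defect e x, e - y], e] = 0.
  by rewrite commDr commNr comm_defect_e12 // comm_defect21 // subrr comm0l.
have H1 := D_Lie3 e (e - y) e; have H2 := D_Lie3 x (e - y) e.
rewrite Ey in H1; rewrite Ex in H2.
have Dex : D (e + x) = D e + D x + add_defect e x.
  by rewrite /add_defect; zmod_normalize.
move: H1 H2 t_comm; rewrite Exy D_Lie3 Dex /comm; expand => H1 H2 t_comm.
by zmod_linear (congr2 +%R (congr2 +%R H1 H2) (esym t_comm)).
Qed.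

Lemma comm_defect12 u x : R12 u -> R12 x -> [add_defect e u, x] = 0.
Proof.
move=> hu hx; set t := add_defect e u.
have te : [t, e] = 0 := comm_defect_e12 hu.
have comm_xy_t y : R21 y -> [x ⊙ y, t] = 0 /\ - [y ⊙ x, t] = 0.
  move=> hy; apply: peirce_sum_eq0.
  - exact: comm_e0_comm11 te (mul12_21 hx hy).
  - exact/peirceN/(comm_e0_comm22 te (mul21_12 hy hx)).
  have := add_defect_comm2r e u x y; rewrite (comm_comm12_21_e hx hy) add_defect0l.
  by rewrite -commNl -commDl.
have xt12 : R12 [x, t] := comm_e0_comm12 te hx.
have xt_ann : ann12 [x, t].
  split=> // y hy.
  have [xyt /oppr0_inj yxt] := comm_xy_t y hy.
  have yt : [y, t] = 0 by rewrite commC comm_defect21 ?oppr0.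
  have L1 := comm_mul_leibniz x y t; have L2 := comm_mul_leibniz y x t.
  rewrite xyt yt mulr0 subrr sub0r in L1.
  rewrite yxt yt mul0r subr0 sub0r associatorC12 mulNrn in L2.
  apply: peirce_sum_eq0 (mul12_21 xt12 hy) (mul21_12 hy xt12) _.
  by zmod_linear (congr2 +%R L1 L2).
by rewrite commC (ann12_eq0 xt_ann) oppr0.
Qed.

Lemma Lie3_additive12 a b : R12 a -> R12 b -> D (a + b) = D a + D b.
Proof.
move=> ha hb; have [/= a1 a2] := ha; have [/= b1 b2] := hb.
have [/= ab1 ab2] := mul12_12 ha hb; have [/= ba1 ba2] := mul12_12 hb ha.
have Eb : [[e, b - e], - e] = b.
  rewrite /comm; expand.
  by repeat progress rewrite ?idem_e ?b1 ?b2 ?mul0r ?mulr0; zmod_normalize.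
have Ea : [[a, b - e], - e] = a - [a, b].
  rewrite /comm; expand.
  repeat progress rewrite ?a1 ?a2 ?b1 ?b2 ?ab1 ?ab2 ?ba1 ?ba2 ?mul0r ?mulr0.
  by zmod_normalize.
have Eab : a + b - [a, b] = [[e + a, b - e], - e].
  rewrite /comm; expand.
  repeat progress rewrite ?idem_e ?a1 ?a2 ?b1 ?b2 ?ab1 ?ab2 ?ba1 ?ba2 ?mul0r ?mulr0.
  by zmod_normalize.
have t_comm : [[add_defect e a, b - e], - e] = 0.
  by rewrite commDr !commNr comm_defect12 // comm_defect_e12 // subrr comm0l oppr0.
have H1 := D_Lie3 e (b - e) (- e); have H2 := D_Lie3 a (b - e) (- e).
rewrite Eb in H1; rewrite Ea in H2.
have Dea : D (e + a) = D e + D a + add_defect e a.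
  by rewrite /add_defect; zmod_normalize.
have E : D (a + b - [a, b]) = D b + D (a - [a, b]).
  move: H1 H2 t_comm; rewrite Eab D_Lie3 Dea /comm; expand => H1 H2 t_comm.
  by zmod_linear (congr2 +%R (congr2 +%R H1 H2) (esym t_comm)).
have ab21 : R21 (- [a, b]) := peirceN (peirceB (mul12_12 ha hb) (mul12_12 hb ha)).
move: E; rewrite (Lie3_additive12_21 (peirceD ha hb) ab21).
by rewrite (Lie3_additive12_21 ha ab21) => E; zmod_linear E.
Qed.

(* Additivity on R21 is the R12 case for the converse multiplication, so it is
   taken as a hypothesis here and supplied after the section is closed. *)
Lemma comm_add_defect_e :
  (forall y y', R21 y -> R21 y' -> D (y + y') = D y + D y') ->
  forall a b, [add_defect a b, e] = 0.
Proof.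
move=> additive21 a b; apply: comm_e_eq0; rewrite -add_defect_comm2l !comm_comm_e.
move: (proj12P a) (proj21P a) (proj12P b) (proj21P b).
move: (proj12 a) (proj21 a) (proj12 b) (proj21 b) => p q p' q' hp hq hp' hq'.
rewrite /add_defect addrACA (Lie3_additive12_21 (peirceD hp hp') (peirceD hq hq')).
rewrite (Lie3_additive12 hp hp') (additive21 _ _ hq hq').
by rewrite (Lie3_additive12_21 hp hq) (Lie3_additive12_21 hp' hq'); zmod_normalize.
Qed.

End Peirce.
End AlternativeRing.

(** * The converse ring *)

Definition converse (R : zmodType) (mul : R -> R -> R) : R -> R -> R :=
  fun x y => mul y x.

Section ConverseRing.
Variables (R : zmodType) (mul : R -> R -> R).
Local Notation mul' := (converse mul).

Lemma converse_biadditive : biadditive mul -> biadditive mul'.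
Proof. by case=> mulDl mulDr; split=> x y z; [exact: mulDr | exact: mulDl]. Qed.

Lemma converse_associator x y z : associator mul' x y z = - associator mul z y x.
Proof. by rewrite /associator /converse opprB. Qed.

Lemma converse_alternative : alternative mul -> alternative mul'.
Proof.
by move=> alt x y; rewrite !converse_associator (alt x y).1 (alt x y).2 oppr0.
Qed.

Lemma converse_comm x y : comm mul' x y = - comm mul x y.
Proof. by rewrite /comm /converse opprB. Qed.

Lemma converse_ideal (I : R -> Prop) : is_ideal mul' I <-> is_ideal mul I.
Proof. by split=> -[I0 [IB IM]]; do 2!split=> //; move=> r x /(IM r)[]. Qed.

Lemma converse_prime : prime_ring mul -> prime_ring mul'.
Proof.
move=> prime I J iI iJ nzI nzJ.
have [b [a [Jb [Ia ba_neq0]]]] :=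
  prime J I ((converse_ideal J).1 iJ) ((converse_ideal I).1 iI) nzJ nzI.
by exists a, b.
Qed.

Lemma converse_peirce e i j x : peirce mul' e i j x <-> peirce mul e j i x.
Proof. by split=> -[]. Qed.

Lemma converse_Lie3 D :
  biadditive mul -> mult_Lie3_derivation mul D -> mult_Lie3_derivation mul' D.
Proof.
move=> bi D_Lie3 x y w.
have conv2 a b c : comm mul' (comm mul' a b) c = comm mul (comm mul a b) c.
  by rewrite !converse_comm (commNl bi) opprK.
by rewrite !conv2; exact: D_Lie3.
Qed.

End ConverseRing.

Section Lie3Additivity.
Variables (R : zmodType) (mul : R -> R -> R).
Hypotheses (mul_biadditive : biadditive mul) (mul_alternative : alternative mul)
  (mul_prime : prime_ring mul).
Variables (D : R -> R) (e : R).
Hypotheses (D_Lie3 : mult_Lie3_derivation mul D) (idem_e : mul e e = e).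

Lemma Lie3_additive21 y y' :
  peirce mul e false true y -> peirce mul e false true y' -> D (y + y') = D y + D y'.
Proof.
move=> /converse_peirce hy /converse_peirce hy'.
exact: (Lie3_additive12 (converse_biadditive mul_biadditive)
  (converse_alternative mul_alternative) (converse_Lie3 mul_biadditive D_Lie3)
  idem_e (converse_prime mul_prime) hy hy').
Qed.

Lemma comm_add_defect_idempotent a b : comm mul (add_defect D a b) e = 0.
Proof.
exact: (comm_add_defect_e mul_biadditive mul_alternative D_Lie3 idem_e mul_prime
  Lie3_additive21).
Qed.

End Lie3Additivity.

Theorem corollary2p8 (R : zmodType) (mul : R -> R -> R)
  (Hbi : biadditive mul) (Halt : alternative mul)
  (H3 : three_torsion_free R) (Hprime : prime_ring mul)
  (e1 : R) (He1 : nontrivial_idempotent mul e1)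
  (D : R -> R) (HD : mult_Lie3_derivation mul D) :
  forall a b : R, in_center mul (D (a + b) - D a - D b).
Proof.
move=> a b; have [e1_neq0 [idem_e1 e1_not_unit]] := He1.
have defect_idem f : mul f f = f -> comm mul (add_defect D a b) f = 0.
  by move=> idem_f; apply: comm_add_defect_idempotent.
apply: (centralizer_center Hbi Halt idem_e1 Hprime (defect_idem _ idem_e1)) => // c hc.
- have := defect_idem _ (idempotentD12 Hbi Halt idem_e1 hc).
  by rewrite (commDr Hbi) defect_idem // add0r.
- have := defect_idem _ (idempotentD21 Hbi Halt idem_e1 hc).
  by rewrite (commDr Hbi) defect_idem // add0r.
Qed.
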